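(* For every real number $r\ge 1$, the function $f_r:[0,1]\to\mathbb{R}$ defined by $$f_r(x):=\sum_{m\in\mathbb{Z}}\Big|\frac{\sin(\pi(x+m))}{\pi(x+m)}\Big|^{2r},\qquad x\in[0,1],$$ attains its global minimum on $[0,1]$ at $x=\tfrac12$.
   Context: The summands have removable singularities (at $x+m=0$); each is understood to be its unique continuous extension (so the summand equals $1$ when $x+m=0$). *)

From Stdlib Require Import Reals.
From Coquelicot Require Import Coquelicot.
Open Scope R_scope.

Definition sinc (t : R) : R :=
  if Req_EM_T t 0 then 1 else sin t / t.

(* a ^ y for a >= 0 and y > 0, with the convention 0 ^ y = 0
   (Stdlib's Rpower 0 y = 1, so we guard the zero case). *)
Definition rpow (a y : R) : R :=
  if Req_EM_T a 0 then 0 else Rpower a y.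

Definition term (r t : R) : R := rpow (Rabs (sinc (PI * t))) (2 * r).

(* f_r(x) = sum_{m in Z} term r (x + m), written as the sum over m >= 0
   plus the sum over m <= -1 (all terms nonnegative, series converge for r >= 1). *)
Definition sinc_sum (r x : R) : R :=
  Series (fun n : nat => term r (x + INR n))
  + Series (fun n : nat => term r (x - INR (S n))).

(* Write g(t) = sinc(pi t)^2 (sinc_sq), so that the summands are g(x + m)^r. The
   periodization G(y) = sum_m g(y + m) (sinc_sq_sum) satisfies
   G(y) = cos^2(pi y/2) G(y/2) + sin^2(pi y/2) G((y+1)/2), because sinc(2u) = cos(u) sinc(u).
   A continuous function on [0,1] with this property and G(0) = G(1) is constant (at a
   minimizer y the value propagates to y/2, y/4, ..., hence to 0; likewise for a maximizer),
   so G = 1 on [0,1].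
   Fix x and put a_m = g(x + m), b_m = g(1/2 + m). Then sum_m a_m = sum_m b_m = 1, b is even
   around m = -1/2 and decreasing in |m + 1/2|, and an elementary estimate gives
   a_n + a_{-n-1} <= 2 b_n for n >= 1. By convexity, a^r - b^r >= r b^(r-1) (a - b). Pairing
   m = n with m = -n-1, only the central pair can have a_n + a_{-n-1} > 2 b_n, and it carries
   the largest weight r b_0^(r-1); hence
   sum_m (a_m^r - b_m^r) >= r b_0^(r-1) sum_m (a_m - b_m) = 0. *)

From Stdlib Require Import Reals Lra Lia Psatz.
From Coquelicot Require Import Coquelicot.
Open Scope R_scope.

Lemma PI_gt_3 : 3 < PI.
Proof. pose proof PI2_3_2. lra. Qed.

Lemma Rabs_sin_le_id x : 0 <= x -> Rabs (sin x) <= x.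
Proof.
  intros Hx. pose proof PI_gt_3. pose proof (SIN_bound x). apply Rabs_le. split.
  - destruct (Rle_lt_dec x PI); [pose proof (sin_ge_0 x Hx r)|]; lra.
  - destruct (Req_dec x 0) as [->|Hx0]; [rewrite sin_0; lra|].
    pose proof (sin_lt_x x). lra.
Qed.

Lemma Rabs_sin_le x : Rabs (sin x) <= Rabs x.
Proof.
  destruct (Rle_lt_dec 0 x).
  - rewrite (Rabs_pos_eq x) by lra. now apply Rabs_sin_le_id.
  - rewrite <- Rabs_Ropp, <- sin_neg, (Rabs_left x) by lra. apply Rabs_sin_le_id. lra.
Qed.

(* 21/50 is what sin_sq_PI_ge needs: (21 PI / 50)^2 > 3/2. *)
Lemma sin_ge_linear v : 0 <= v <= 2 -> 21/50 * v <= sin v.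
Proof.
  intros Hv. pose proof PI_gt_3.
  (* the degree-7 Taylor polynomial is a lower bound on [0, PI] *)
  destruct (sin_bound v 1 ltac:(lra) ltac:(lra)) as [Hlb _].
  unfold sin_approx, sin_term in Hlb. cbn [sum_f_R0 Nat.mul Nat.add] in Hlb.
  rewrite !INR_IZR_INZ in Hlb. cbn -[IZR pow Rdiv Rmult] in Hlb.
  set (w := v * v) in *.
  assert (Hw : 0 <= w <= 4) by (unfold w; nra).
  assert (Hp : 0 <= 29/50 - w/6 + w^2/120 - w^3/5040) by nra.
  replace (v ^ 7) with (v * w ^ 3) in Hlb by (unfold w; ring).
  replace (v ^ 5) with (v * w ^ 2) in Hlb by (unfold w; ring).
  replace (v ^ 3) with (v * w) in Hlb by (unfold w; ring).
  nra.
Qed.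

Lemma sin_sq_PI_ge u : Rabs u <= 1/2 -> 3/2 * (u * u) <= sin (PI * u) * sin (PI * u).
Proof.
  intros Hu. pose proof PI_gt_3. pose proof PI_4.
  set (v := PI * Rabs u).
  assert (Hv : 0 <= v <= 2) by (unfold v; pose proof (Rabs_pos u); nra).
  assert (Hsq : sin (PI * u) * sin (PI * u) = sin v * sin v).
  { unfold v. destruct (Rle_lt_dec 0 u); [now rewrite Rabs_pos_eq|].
    rewrite Rabs_left, <- Ropp_mult_distr_r, sin_neg by lra. ring. }
  assert (Huu : u * u = Rabs u * Rabs u)
    by (rewrite <- Rabs_mult; symmetry; apply Rabs_pos_eq; nra).
  rewrite Hsq. pose proof (sin_ge_linear v Hv).
  assert (21/50 * v * (21/50 * v) <= sin v * sin v) by (apply Rmult_le_compat; lra).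
  unfold v in *. rewrite Huu.
  assert (9 * (Rabs u * Rabs u) <= PI * PI * (Rabs u * Rabs u))
    by (apply Rmult_le_compat_r; nra).
  nra.
Qed.

Lemma sin_sq_plus_INR_PI x n :
  sin (x + INR n * PI) * sin (x + INR n * PI) = sin x * sin x.
Proof.
  induction n as [|n IH]; [simpl; rewrite Rmult_0_l, Rplus_0_r; reflexivity|].
  rewrite S_INR, <- IH. replace (x + (INR n + 1) * PI) with (x + INR n * PI + PI) by ring.
  rewrite neg_sin. ring.
Qed.

Lemma cos_sq_plus_INR_PI x n :
  cos (x + INR n * PI) * cos (x + INR n * PI) = cos x * cos x.
Proof.
  induction n as [|n IH]; [simpl; rewrite Rmult_0_l, Rplus_0_r; reflexivity|].
  rewrite S_INR, <- IH. replace (x + (INR n + 1) * PI) with (x + INR n * PI + PI) by ring.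
  rewrite neg_cos. ring.
Qed.

Lemma sin_sq_minus_INR_PI x n :
  sin (x - INR n * PI) * sin (x - INR n * PI) = sin x * sin x.
Proof. rewrite <- (sin_sq_plus_INR_PI (x - INR n * PI) n). f_equal; f_equal; ring. Qed.

Lemma cos_sq_minus_INR_PI x n :
  cos (x - INR n * PI) * cos (x - INR n * PI) = cos x * cos x.
Proof. rewrite <- (cos_sq_plus_INR_PI (x - INR n * PI) n). f_equal; f_equal; ring. Qed.

Lemma inv_sq_pair_le s t u : 0 <= s <= 1 - 3/2 * (u * u) -> 3/2 <= t -> Rabs u <= 1/2 ->
  s / ((t + u) * (t + u)) + s / ((t - u) * (t - u)) <= 2 / (t * t).
Proof.
  intros Hs Ht Hu. apply Rabs_le_between in Hu.
  assert (Hkey : s * (t * t) * (t * t + u * u) <= (t * t - u * u) * (t * t - u * u)).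
  { apply Rle_trans with ((1 - 3/2 * (u * u)) * (t * t) * (t * t + u * u));
      [apply Rmult_le_compat_r; [|apply Rmult_le_compat_r]; nra|].
    assert (0 <= u * u * (3/2 * (t * t) * (t * t - 2)))
      by (apply Rmult_le_pos; [|apply Rmult_le_pos]; nra).
    nra. }
  assert (Hpos : 0 < t * t - u * u) by nra.
  assert (Hdiff : 2 / (t * t) - (s / ((t + u) * (t + u)) + s / ((t - u) * (t - u)))
    = 2 * ((t * t - u * u) * (t * t - u * u) - s * (t * t) * (t * t + u * u))
      / ((t * t) * ((t * t - u * u) * (t * t - u * u)))) by (field; repeat split; nra).
  assert (0 <= 2 * ((t * t - u * u) * (t * t - u * u) - s * (t * t) * (t * t + u * u))
      / ((t * t) * ((t * t - u * u) * (t * t - u * u)))).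
  { apply Rdiv_le_0_compat; [lra|]. apply Rmult_lt_0_compat; nra. }
  lra.
Qed.

Lemma ex_series_scal_R (c : R) (a : nat -> R) :
  ex_series a -> ex_series (fun n => c * a n).
Proof. apply (ex_series_scal_l (V := R_NormedModule)). Qed.

Lemma ex_series_plus_R (a b : nat -> R) :
  ex_series a -> ex_series b -> ex_series (fun n => a n + b n).
Proof. apply (ex_series_plus (V := R_NormedModule)). Qed.

Lemma ex_series_minus_R (a b : nat -> R) :
  ex_series a -> ex_series b -> ex_series (fun n => a n - b n).
Proof. apply (ex_series_minus (V := R_NormedModule)). Qed.

Lemma ex_series_dominated (a b : nat -> R) :
  (forall n, 0 <= a n <= b n) -> ex_series b -> ex_series a.
Proof.
  intros Hab Hb. apply (ex_series_le a b); [|exact Hb].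
  intros n. change (norm (a n)) with (Rabs (a n)). rewrite Rabs_pos_eq; apply Hab.
Qed.

Lemma Series_zero (a : nat -> R) : (forall n, a n = 0) -> Series a = 0.
Proof.
  intros Ha. rewrite (Series_ext a (fun n => 0 * a n)) by (intros n; rewrite Ha; ring).
  rewrite Series_scal_l. ring.
Qed.

Lemma Series_le_ex (u v : nat -> R) :
  ex_series u -> ex_series v -> (forall n, u n <= v n) -> Series u <= Series v.
Proof.
  intros Hu Hv Huv.
  assert (Hdiff : Series (fun _ => 0) <= Series (fun n => v n - u n)).
  { apply Series_le; [intros n; specialize (Huv n); lra|].
    now apply ex_series_minus_R. }
  rewrite Series_zero, Series_minus in Hdiff by auto. lra.
Qed.

Lemma is_lim_seq_sum_f_R0 (a : nat -> R) : ex_series a ->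
  is_lim_seq (sum_f_R0 a) (Series a).
Proof. intros Ha. apply is_lim_seq_Reals, is_series_Reals, Series_correct, Ha. Qed.

Lemma sum_f_R0_even_odd (v : nat -> R) K :
  sum_f_R0 v (2 * K + 1) =
  sum_f_R0 (fun k => v (2 * k)%nat) K + sum_f_R0 (fun k => v (2 * k + 1)%nat) K.
Proof.
  induction K as [|K IH]; [simpl; ring|].
  replace (2 * S K + 1)%nat with (S (S (2 * K + 1))) by lia. rewrite !tech5, IH.
  replace (S (2 * K + 1)) with (2 * S K)%nat by lia.
  replace (S (2 * S K)) with (2 * S K + 1)%nat by lia. ring.
Qed.

Lemma Series_even_odd (v : nat -> R) : ex_series v ->
  ex_series (fun k => v (2 * k)%nat) -> ex_series (fun k => v (2 * k + 1)%nat) ->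
  Series v = Series (fun k => v (2 * k)%nat) + Series (fun k => v (2 * k + 1)%nat).
Proof.
  intros Hv Heven Hodd.
  assert (Hsub : is_lim_seq (fun K => sum_f_R0 v (2 * K + 1)) (Series v)).
  { apply (is_lim_seq_subseq (sum_f_R0 v)); [|now apply is_lim_seq_sum_f_R0].
    intros P [N HN]. exists N. intros n Hn. apply HN. lia. }
  assert (Hsplit : is_lim_seq (fun K => sum_f_R0 v (2 * K + 1))
    (Series (fun k => v (2 * k)%nat) + Series (fun k => v (2 * k + 1)%nat))).
  { apply (is_lim_seq_ext _ _ _ (fun K => eq_sym (sum_f_R0_even_odd v K))).
    apply is_lim_seq_plus'; now apply is_lim_seq_sum_f_R0. }
  apply is_lim_seq_unique in Hsub. apply is_lim_seq_unique in Hsplit.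
  rewrite Hsub in Hsplit. now injection Hsplit.
Qed.

Lemma Series_even_odd_scal (v e o : nat -> R) (c s : R) :
  ex_series v -> ex_series e -> ex_series o ->
  (forall k, v (2 * k)%nat = c * e k) -> (forall k, v (2 * k + 1)%nat = s * o k) ->
  Series v = c * Series e + s * Series o.
Proof.
  intros Hv He Ho Hev Hod.
  rewrite Series_even_odd, (Series_ext _ _ Hev), (Series_ext _ _ Hod), !Series_scal_l; auto.
  - apply (ex_series_ext _ _ (fun k => eq_sym (Hev k))), ex_series_scal_R, He.
  - apply (ex_series_ext _ _ (fun k => eq_sym (Hod k))), ex_series_scal_R, Ho.
Qed.

Lemma continuity_pt_Series (fn : nat -> R -> R) (M : nat -> R) (rad : posreal) :
  (forall n y, continuity_pt (fn n) y) ->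
  (forall n y, Rabs y < rad -> Rabs (fn n y) <= M n) -> ex_series M ->
  forall x, Rabs x < rad -> continuity_pt (fun y => Series (fun n => fn n y)) x.
Proof.
  intros Hcont Hbound HM x Hx.
  assert (HM0 : forall n, 0 <= M n).
  { intros n. apply Rle_trans with (Rabs (fn n 0)); [apply Rabs_pos|].
    apply Hbound. rewrite Rabs_R0. apply cond_pos. }
  assert (Hnormal : CVN_r fn rad).
  { exists M, (Series M). split.
    - apply is_series_Reals. apply (is_series_ext M); [intros n; symmetry; apply Rabs_pos_eq, HM0|].
      now apply Series_correct.
    - intros n y Hy. apply Hbound. unfold Boule in Hy. now rewrite Rminus_0_r in Hy. }
  destruct (CVN_CVU_r fn rad Hnormal x Hx) as [e He].
  apply (CVU_continuity _ _ x e He).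
  - intros n y _. apply continuity_pt_finite_SF. intros k _. apply Hcont.
  - unfold Boule. rewrite Rminus_eq_0, Rabs_R0. apply cond_pos.
Qed.

(** * The squared sinc kernel *)

Lemma sinc_0 : sinc 0 = 1.
Proof. unfold sinc. destruct (Req_EM_T 0 0); congruence. Qed.

Lemma sinc_neq0 t : t <> 0 -> sinc t = sin t / t.
Proof. intros Ht. unfold sinc. destruct (Req_EM_T t 0); congruence. Qed.

Lemma sinc_opp t : sinc (- t) = sinc t.
Proof.
  destruct (Req_dec t 0) as [->|Ht]; [now rewrite Ropp_0|].
  rewrite !sinc_neq0, sin_neg by lra. field. exact Ht.
Qed.

Lemma Rabs_sinc_le_1 t : Rabs (sinc t) <= 1.
Proof.
  destruct (Req_dec t 0) as [->|Ht]; [rewrite sinc_0, Rabs_R1; lra|].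
  rewrite sinc_neq0, Rabs_div by exact Ht.
  pose proof (Rabs_pos_lt t Ht). apply Rcomplements.Rle_div_l; [lra|].
  rewrite Rmult_1_l. apply Rabs_sin_le.
Qed.

Lemma continuity_pt_sinc t : continuity_pt sinc t.
Proof.
  destruct (Req_dec t 0) as [->|Ht].
  - intros eps Heps. destruct (derivable_pt_lim_sin 0 eps Heps) as [del Hdel].
    exists del. split; [apply cond_pos|]. intros y [[_ Hy0] Hy]. simpl in *.
    unfold R_dist in *. rewrite Rminus_0_r in Hy.
    specialize (Hdel y (not_eq_sym Hy0) Hy).
    rewrite sinc_0, sinc_neq0 by auto. rewrite Rplus_0_l, sin_0, cos_0, Rminus_0_r in Hdel.
    exact Hdel.
  - apply (continuity_pt_locally_ext (fun y => sin y / y) sinc (Rabs t)).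
    + now apply Rabs_pos_lt.
    + intros y Hy. symmetry. apply sinc_neq0. intros ->.
      unfold Rdist in Hy. rewrite Rminus_0_l, Rabs_Ropp in Hy. lra.
    + apply continuity_pt_div; [apply continuity_sin | apply continuity_pt_id | exact Ht].
Qed.

Definition sinc_sq (t : R) : R := sinc (PI * t) * sinc (PI * t).

Lemma sinc_sq_nonneg t : 0 <= sinc_sq t.
Proof. unfold sinc_sq. nra. Qed.

Lemma sinc_sq_le_1 t : sinc_sq t <= 1.
Proof.
  unfold sinc_sq. pose proof (proj1 (Rabs_le_between _ _) (Rabs_sinc_le_1 (PI * t))). nra.
Qed.

Lemma sinc_sq_0 : sinc_sq 0 = 1.
Proof. unfold sinc_sq. rewrite Rmult_0_r, sinc_0. ring. Qed.

Lemma sinc_sq_opp t : sinc_sq (- t) = sinc_sq t.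
Proof. unfold sinc_sq. now rewrite Ropp_mult_distr_r_reverse, sinc_opp. Qed.

Lemma sinc_sq_neq0 t : t <> 0 ->
  sinc_sq t = sin (PI * t) * sin (PI * t) / ((PI * t) * (PI * t)).
Proof.
  intros Ht. pose proof PI_RGT_0.
  assert (PI * t <> 0) by (apply Rmult_integral_contrapositive_currified; lra).
  unfold sinc_sq. rewrite sinc_neq0 by assumption. field; lra.
Qed.

Lemma sinc_sq_INR n : (1 <= n)%nat -> sinc_sq (INR n) = 0.
Proof.
  intros Hn. assert (INR n <> 0) by (apply not_0_INR; lia).
  rewrite sinc_sq_neq0 by assumption.
  replace (PI * INR n) with (0 + INR n * PI) by ring.
  rewrite sin_sq_plus_INR_PI, sin_0. unfold Rdiv. ring.
Qed.

Lemma sinc_sq_mul_sq_le_1 t : sinc_sq t * (t * t) <= 1.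
Proof.
  destruct (Req_dec t 0) as [->|Ht]; [rewrite sinc_sq_0; lra|].
  pose proof PI_gt_3. pose proof (SIN_bound (PI * t)).
  rewrite sinc_sq_neq0 by assumption.
  replace (sin (PI * t) * sin (PI * t) / (PI * t * (PI * t)) * (t * t))
    with (sin (PI * t) * sin (PI * t) / (PI * PI)) by (field; lra).
  apply Rcomplements.Rle_div_l; nra.
Qed.

Lemma sinc_sq_double u : sinc_sq (2 * u) = cos (PI * u) * cos (PI * u) * sinc_sq u.
Proof.
  destruct (Req_dec u 0) as [->|Hu]; [rewrite Rmult_0_r, !sinc_sq_0, Rmult_0_r, cos_0; ring|].
  pose proof PI_gt_3. rewrite !sinc_sq_neq0 by lra.
  replace (PI * (2 * u)) with (2 * (PI * u)) by ring. rewrite sin_2a. field. lra.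
Qed.

Lemma sinc_sq_double_plus_INR y k :
  sinc_sq (2 * (y + INR k)) = cos (PI * y) * cos (PI * y) * sinc_sq (y + INR k).
Proof.
  rewrite sinc_sq_double, <- (cos_sq_plus_INR_PI (PI * y) k).
  f_equal; f_equal; f_equal; ring.
Qed.

Lemma sinc_sq_double_minus_INR y k :
  sinc_sq (2 * (y - INR k)) = cos (PI * y) * cos (PI * y) * sinc_sq (y - INR k).
Proof.
  rewrite sinc_sq_double, <- (cos_sq_minus_INR_PI (PI * y) k).
  f_equal; f_equal; f_equal; ring.
Qed.

Lemma sinc_sq_half_plus_INR n :
  sinc_sq (1/2 + INR n) = 1 / (PI * PI * ((INR n + 1/2) * (INR n + 1/2))).
Proof.
  pose proof (pos_INR n). pose proof PI_gt_3. rewrite sinc_sq_neq0 by lra.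
  replace (PI * (1/2 + INR n)) with (PI/2 + INR n * PI) by field.
  rewrite sin_sq_plus_INR_PI, sin_PI2. field. repeat split; nra.
Qed.

Lemma sinc_sq_half_minus_INR n : sinc_sq (1/2 - INR (S n)) = sinc_sq (1/2 + INR n).
Proof. rewrite <- sinc_sq_opp, S_INR. f_equal. field. Qed.

Lemma sinc_sq_half_plus_INR_bounds n :
  0 < sinc_sq (1/2 + INR n) <= sinc_sq (1/2 + INR 0).
Proof.
  rewrite !sinc_sq_half_plus_INR. pose proof PI_gt_3. pose proof (pos_INR n). simpl INR.
  split.
  - apply Rdiv_lt_0_compat; [lra|]. apply Rmult_lt_0_compat; nra.
  - unfold Rdiv. rewrite !Rmult_1_l. apply Rinv_le_contravar; [nra|].
    apply Rmult_le_compat_l; nra.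
Qed.

Lemma sinc_sq_pair_le x n : 0 <= x <= 1 -> (1 <= n)%nat ->
  sinc_sq (x + INR n) + sinc_sq (x - INR (S n)) <= 2 * sinc_sq (1/2 + INR n).
Proof.
  intros Hx Hn. pose proof PI_gt_3. assert (Hn1 : 1 <= INR n) by (apply (le_INR 1); exact Hn).
  set (t := INR n + 1/2). set (u := x - 1/2). set (s := sin (PI * x) * sin (PI * x)).
  assert (Hplus : sinc_sq (x + INR n) = s / ((t + u) * (t + u)) / (PI * PI)).
  { rewrite sinc_sq_neq0 by lra. unfold s.
    replace (PI * (x + INR n)) with (PI * x + INR n * PI) by ring.
    rewrite sin_sq_plus_INR_PI. unfold t, u. field; repeat split; nra. }
  assert (Hminus : sinc_sq (x - INR (S n)) = s / ((t - u) * (t - u)) / (PI * PI)).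
  { rewrite sinc_sq_neq0 by (rewrite S_INR; lra). unfold s.
    replace (PI * (x - INR (S n))) with (PI * x - INR (S n) * PI) by ring.
    rewrite sin_sq_minus_INR_PI, S_INR. unfold t, u. field; repeat split; nra. }
  assert (Hhalf : sinc_sq (1/2 + INR n) = 1 / (t * t) / (PI * PI)).
  { rewrite sinc_sq_half_plus_INR. unfold t. field; repeat split; nra. }
  assert (Hs : s = 1 - sin (PI * u) * sin (PI * u)).
  { unfold s, u. replace (PI * x) with (PI / 2 + PI * (x - 1/2)) by field.
    rewrite <- cos_sin. pose proof (sin2_cos2 (PI * (x - 1/2))). unfold Rsqr in *. lra. }
  pose proof (sin_sq_PI_ge u ltac:(apply Rabs_le_between; unfold u; lra)).
  assert (0 <= s) by (unfold s; nra).
  pose proof (inv_sq_pair_le s t u ltac:(lra) ltac:(unfold t; lra)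
    ltac:(apply Rabs_le_between; unfold u; lra)) as Hpair.
  rewrite Hplus, Hminus, Hhalf.
  replace (2 * (1 / (t * t) / (PI * PI))) with (2 / (t * t) / (PI * PI)) by (unfold Rdiv; ring).
  rewrite <- Rdiv_plus_distr.
  apply (Rmult_le_compat_r (/ (PI * PI))); [apply Rlt_le, Rinv_0_lt_compat; nra | exact Hpair].
Qed.

Definition sinc_sq_majorant (n : nat) : R := 50 / ((INR n + 1) * (INR n + 2)).

Lemma sinc_sq_le_majorant t n : INR n <= Rabs t + 2 -> sinc_sq t <= sinc_sq_majorant n.
Proof.
  intros Hn. pose proof (pos_INR n). pose proof (sinc_sq_nonneg t). pose proof (sinc_sq_le_1 t).
  pose proof (sinc_sq_mul_sq_le_1 t). unfold sinc_sq_majorant.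
  apply (Rcomplements.Rle_div_r (sinc_sq t)); [nra|].
  (* 50 works because (n + 1)(n + 2) <= 25 (1 + (n - 2)^2) for every real n *)
  destruct (Rle_lt_dec (INR n) 2) as [Hle|Hgt].
  { assert ((INR n + 1) * (INR n + 2) <= 12) by nra. nra. }
  assert (Habs : Rabs t * Rabs t = t * t) by (rewrite <- Rabs_mult; apply Rabs_pos_eq; nra).
  assert ((INR n - 2) * (INR n - 2) <= t * t) by (rewrite <- Habs; apply Rmult_le_compat; lra).
  assert ((INR n + 1) * (INR n + 2) <= 25 * (1 + t * t)) by nra.
  apply Rle_trans with (sinc_sq t * (25 * (1 + t * t))); [apply Rmult_le_compat_l|]; lra.
Qed.

Lemma is_series_sinc_sq_majorant : is_series sinc_sq_majorant 50.
Proof.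
  assert (Hsum : forall N, sum_n sinc_sq_majorant N = 50 - 50 * / (INR N + 2)).
  { unfold sinc_sq_majorant. induction N as [|N IH].
    - rewrite sum_O. simpl. field.
    - rewrite sum_Sn, IH, S_INR. pose proof (pos_INR N). unfold plus; simpl. field. lra. }
  assert (Hinf : is_lim_seq (fun N => INR N + 2) p_infty).
  { apply (is_lim_seq_ext (fun N => INR (N + 2))); [intros N; rewrite plus_INR; simpl; ring|].
    apply (is_lim_seq_incr_n INR 2 p_infty), is_lim_seq_INR. }
  assert (Hlim : is_lim_seq (fun N => 50 - 50 * / (INR N + 2)) (50 - 50 * 0)).
  { apply is_lim_seq_minus'; [apply is_lim_seq_const|].
    apply (is_lim_seq_scal_l _ 50 0). now apply (is_lim_seq_inv _ p_infty). }
  rewrite Rmult_0_r, Rminus_0_r in Hlim.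
  exact (is_lim_seq_ext _ _ _ (fun N => eq_sym (Hsum N)) Hlim).
Qed.

Lemma ex_series_sinc_sq_majorant : ex_series sinc_sq_majorant.
Proof. exists 50. exact is_series_sinc_sq_majorant. Qed.

Lemma sinc_sq_plus_INR_le_majorant y n : Rabs y <= 2 ->
  sinc_sq (y + INR n) <= sinc_sq_majorant n.
Proof.
  intros Hy. apply sinc_sq_le_majorant. apply Rabs_le_between in Hy.
  pose proof (Rle_abs (y + INR n)). lra.
Qed.

Lemma sinc_sq_minus_INR_le_majorant y n : Rabs y <= 2 ->
  sinc_sq (y - INR (S n)) <= sinc_sq_majorant n.
Proof.
  intros Hy. apply sinc_sq_le_majorant. apply Rabs_le_between in Hy.
  pose proof (Rle_abs (- (y - INR (S n)))) as H. rewrite Rabs_Ropp, S_INR in H. rewrite S_INR. lra.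
Qed.

Lemma ex_series_sinc_sq_plus y : Rabs y <= 2 -> ex_series (fun n => sinc_sq (y + INR n)).
Proof.
  intros Hy. apply (ex_series_dominated _ sinc_sq_majorant); [|exact ex_series_sinc_sq_majorant].
  intros n. split; [apply sinc_sq_nonneg | now apply sinc_sq_plus_INR_le_majorant].
Qed.

Lemma ex_series_sinc_sq_minus y : Rabs y <= 2 -> ex_series (fun n => sinc_sq (y - INR (S n))).
Proof.
  intros Hy. apply (ex_series_dominated _ sinc_sq_majorant); [|exact ex_series_sinc_sq_majorant].
  intros n. split; [apply sinc_sq_nonneg | now apply sinc_sq_minus_INR_le_majorant].
Qed.

Lemma continuity_pt_sinc_sq_shift c x : continuity_pt (fun y => sinc_sq (y + c)) x.
Proof.
  assert (Hs : continuity_pt (fun y => sinc (PI * (y + c))) x).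
  { apply (continuity_pt_ext (comp sinc (fun y => PI * y + PI * c))).
    - intros y. unfold comp. f_equal. ring.
    - apply continuity_pt_comp; [|apply continuity_pt_sinc]. reg. }
  unfold sinc_sq. now apply continuity_pt_mult.
Qed.

(** * The periodization of the kernel is identically 1 *)

Definition sinc_sq_sum (y : R) : R :=
  Series (fun n => sinc_sq (y + INR n)) + Series (fun n => sinc_sq (y - INR (S n))).

Lemma continuity_pt_sinc_sq_sum x : Rabs x < 2 -> continuity_pt sinc_sq_sum x.
Proof.
  intros Hx. assert (H2 : 0 < 2) by lra. set (rad := mkposreal 2 H2).
  apply continuity_pt_plus.
  - apply (continuity_pt_Series _ sinc_sq_majorant rad); auto using ex_series_sinc_sq_majorant.
    + intros n. apply continuity_pt_sinc_sq_shift.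
    + intros n y Hy. rewrite Rabs_pos_eq by apply sinc_sq_nonneg.
      apply sinc_sq_plus_INR_le_majorant. simpl in Hy. lra.
  - apply (continuity_pt_Series _ sinc_sq_majorant rad); auto using ex_series_sinc_sq_majorant.
    + intros n. apply (continuity_pt_sinc_sq_shift (- INR (S n))).
    + intros n y Hy. rewrite Rabs_pos_eq by apply sinc_sq_nonneg.
      apply sinc_sq_minus_INR_le_majorant. simpl in Hy. lra.
Qed.

Lemma sinc_sq_sum_0 : sinc_sq_sum 0 = 1.
Proof.
  unfold sinc_sq_sum.
  rewrite Series_incr_1 by (apply ex_series_sinc_sq_plus; rewrite Rabs_R0; lra).
  rewrite !Series_zero.
  - simpl. rewrite !Rplus_0_r, sinc_sq_0. reflexivity.
  - intros n. rewrite Rminus_0_l, sinc_sq_opp. apply sinc_sq_INR. lia.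
  - intros n. rewrite Rplus_0_l. apply sinc_sq_INR. lia.
Qed.

Lemma sinc_sq_sum_1 : sinc_sq_sum 1 = 1.
Proof.
  unfold sinc_sq_sum.
  rewrite (Series_incr_1 (fun n => sinc_sq (1 - INR (S n))))
    by (apply ex_series_sinc_sq_minus; rewrite Rabs_R1; lra).
  rewrite !Series_zero.
  - simpl. rewrite Rminus_eq_0, sinc_sq_0. ring.
  - intros n. replace (1 - INR (S (S n))) with (- INR (S n)) by (rewrite !S_INR; ring).
    rewrite sinc_sq_opp. apply sinc_sq_INR. lia.
  - intros n. replace (1 + INR n) with (INR (S n)) by (rewrite S_INR; ring).
    apply sinc_sq_INR. lia.
Qed.

Lemma Series_sinc_sq_plus_duplication x : Rabs x <= 1 ->
  Series (fun n => sinc_sq (x + INR n))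
  = cos (PI * (x / 2)) * cos (PI * (x / 2)) * Series (fun k => sinc_sq (x / 2 + INR k))
    + cos (PI * ((x + 1) / 2)) * cos (PI * ((x + 1) / 2))
      * Series (fun k => sinc_sq ((x + 1) / 2 + INR k)).
Proof.
  intros Hx. apply Rabs_le_between in Hx.
  apply Series_even_odd_scal; try (apply ex_series_sinc_sq_plus, Rabs_le_between; lra);
    intros k; rewrite <- sinc_sq_double_plus_INR; f_equal;
    rewrite ?plus_INR, mult_INR; simpl; field.
Qed.

Lemma Series_sinc_sq_minus_duplication x : Rabs x <= 1 ->
  Series (fun n => sinc_sq (x - INR (S n)))
  = cos (PI * ((x + 1) / 2)) * cos (PI * ((x + 1) / 2))
      * Series (fun k => sinc_sq ((x + 1) / 2 - INR (S k)))
    + cos (PI * (x / 2)) * cos (PI * (x / 2)) * Series (fun k => sinc_sq (x / 2 - INR (S k))).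
Proof.
  intros Hx. apply Rabs_le_between in Hx.
  apply Series_even_odd_scal; try (apply ex_series_sinc_sq_minus, Rabs_le_between; lra);
    intros k; rewrite <- sinc_sq_double_minus_INR; f_equal;
    rewrite !S_INR, ?plus_INR, mult_INR; simpl; field.
Qed.

Lemma sinc_sq_sum_duplication x : Rabs x <= 1 ->
  sinc_sq_sum x = cos (PI * (x / 2)) * cos (PI * (x / 2)) * sinc_sq_sum (x / 2)
                + sin (PI * (x / 2)) * sin (PI * (x / 2)) * sinc_sq_sum ((x + 1) / 2).
Proof.
  intros Hx. unfold sinc_sq_sum.
  rewrite Series_sinc_sq_plus_duplication, Series_sinc_sq_minus_duplication by exact Hx.
  replace (PI * ((x + 1) / 2)) with (PI / 2 + PI * (x / 2)) by field.
  rewrite (sin_cos (PI * (x / 2))). ring.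
Qed.

Section DuplicationInvariance.

Variables (w H : R -> R).
Hypothesis w_pos : forall x, 0 <= x < 1 -> 0 < w x.
Hypothesis w_le_1 : forall x, 0 <= x <= 1 -> w x <= 1.
Hypothesis H_duplication : forall x, 0 <= x <= 1 ->
  H x = w x * H (x / 2) + (1 - w x) * H ((x + 1) / 2).
Hypothesis H_continuous_0 : continuity_pt H 0.
Hypothesis H_1 : H 1 = H 0.

Lemma duplication_invariant_minimum x0 : 0 <= x0 <= 1 ->
  (forall y, 0 <= y <= 1 -> H x0 <= H y) -> H x0 = H 0.
Proof.
  intros Hx0 Hmin.
  destruct (Req_dec x0 1) as [->|Hne]; [exact H_1|].
  assert (Hhalf : forall x, 0 <= x < 1 -> H x = H x0 -> H (x / 2) = H x0).
  { intros x Hx Hm. pose proof (H_duplication x ltac:(lra)) as Hd.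
    pose proof (w_pos x Hx). pose proof (w_le_1 x ltac:(lra)).
    pose proof (Hmin (x / 2) ltac:(lra)). pose proof (Hmin ((x + 1) / 2) ltac:(lra)).
    assert (0 <= (1 - w x) * (H ((x + 1) / 2) - H x0)) by (apply Rmult_le_pos; lra).
    nra. }
  assert (Horbit : forall k, H (x0 * (/ 2) ^ k) = H x0 /\ 0 <= x0 * (/ 2) ^ k < 1).
  { induction k as [|k [IH1 IH2]]; [simpl; rewrite Rmult_1_r; lra|].
    replace (x0 * (/ 2) ^ S k) with (x0 * (/ 2) ^ k / 2) by (simpl; field).
    split; [now apply Hhalf | lra]. }
  assert (Hlim : is_lim_seq (fun k => x0 * (/ 2) ^ k) 0).
  { rewrite <- (Rmult_0_r x0). apply (is_lim_seq_scal_l _ x0 0), is_lim_seq_geom.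
    rewrite Rabs_pos_eq; lra. }
  apply (is_lim_seq_continuous H _ 0 H_continuous_0) in Hlim.
  apply (is_lim_seq_ext _ (fun _ => H x0)) in Hlim; [|intros k; apply Horbit].
  apply is_lim_seq_unique in Hlim. rewrite Lim_seq_const in Hlim. now injection Hlim.
Qed.

End DuplicationInvariance.

Lemma duplication_invariant_const (w H : R -> R) :
  (forall x, 0 <= x < 1 -> 0 < w x) -> (forall x, 0 <= x <= 1 -> w x <= 1) ->
  (forall x, 0 <= x <= 1 -> H x = w x * H (x / 2) + (1 - w x) * H ((x + 1) / 2)) ->
  (forall x, 0 <= x <= 1 -> continuity_pt H x) -> H 1 = H 0 ->
  forall x, 0 <= x <= 1 -> H x = H 0.
Proof.
  intros Hpos Hle1 Hdup Hcont H10 x Hx.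
  destruct (continuity_ab_min H 0 1 ltac:(lra) Hcont) as [m [Hm Hm01]].
  destruct (continuity_ab_maj H 0 1 ltac:(lra) Hcont) as [M [HM HM01]].
  pose proof (duplication_invariant_minimum w H Hpos Hle1 Hdup (Hcont 0 ltac:(lra)) H10 m Hm01 Hm).
  assert (Hmax : - H M = - H 0).
  { apply (duplication_invariant_minimum w (fun y => - H y)); auto.
    - intros y Hy. rewrite (Hdup y Hy). ring.
    - apply continuity_pt_opp, Hcont. lra.
    - now rewrite H10.
    - intros y Hy. specialize (HM y Hy). lra. }
  specialize (Hm x Hx). specialize (HM x Hx). lra.
Qed.

Lemma sinc_sq_sum_eq_1 x : 0 <= x <= 1 -> sinc_sq_sum x = 1.
Proof.
  intros Hx. rewrite <- sinc_sq_sum_0.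
  apply (duplication_invariant_const (fun y => cos (PI * (y / 2)) * cos (PI * (y / 2))));
    [| | | |now rewrite sinc_sq_sum_0, sinc_sq_sum_1 | exact Hx].
  - intros y Hy. pose proof PI_RGT_0.
    assert (0 < cos (PI * (y / 2))) by (apply cos_gt_0; nra). nra.
  - intros y _. pose proof (COS_bound (PI * (y / 2))). nra.
  - intros y Hy. rewrite sinc_sq_sum_duplication by (apply Rabs_le_between; lra).
    pose proof (sin2_cos2 (PI * (y / 2))) as H. unfold Rsqr in H.
    replace (sin (PI * (y / 2)) * sin (PI * (y / 2)))
      with (1 - cos (PI * (y / 2)) * cos (PI * (y / 2))) by lra. reflexivity.
  - intros y Hy. apply continuity_pt_sinc_sq_sum. apply Rabs_lt_between. lra.
Qed.

(** * Convexity of the power function *)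

Lemma rpow_0_l y : rpow 0 y = 0.
Proof. unfold rpow. destruct (Req_EM_T 0 0); congruence. Qed.

Lemma rpow_pos_eq a y : 0 < a -> rpow a y = Rpower a y.
Proof. intros Ha. unfold rpow. destruct (Req_EM_T a 0); [lra | reflexivity]. Qed.

Lemma rpow_nonneg a y : 0 <= rpow a y.
Proof. unfold rpow. destruct (Req_EM_T a 0); [lra | apply Rlt_le, exp_pos]. Qed.

Lemma Rpower_1_l y : Rpower 1 y = 1.
Proof. unfold Rpower. rewrite ln_1, Rmult_0_r. apply exp_0. Qed.

Lemma Rpower_pred b r : 0 < b -> Rpower b r = Rpower b (r - 1) * b.
Proof.
  intros Hb. rewrite <- (Rpower_1 b) at 3 by exact Hb. rewrite <- Rpower_plus. f_equal. ring.
Qed.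

Lemma rpow_le_self a r : 0 <= a <= 1 -> 1 <= r -> rpow a r <= a.
Proof.
  intros Ha Hr. destruct (Req_dec a 0) as [->|Ha0]; [rewrite rpow_0_l; lra|].
  rewrite rpow_pos_eq, Rpower_pred by lra.
  assert (H1 : Rpower a (r - 1) <= Rpower 1 (r - 1)) by (apply Rle_Rpower_l; lra).
  rewrite Rpower_1_l in H1.
  pose proof (exp_pos ((r - 1) * ln a)). unfold Rpower in *. nra.
Qed.

Lemma rpow_ge_tangent a b r : 0 <= a -> 0 < b -> 1 <= r ->
  Rpower b r + r * Rpower b (r - 1) * (a - b) <= rpow a r.
Proof.
  intros Ha Hb Hr.
  assert (Hderiv : forall c, 0 < c ->
    derivable_pt_lim (fun y => Rpower y r) c (r * Rpower c (r - 1)))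
    by (intros c Hc; now apply derivable_pt_lim_power).
  destruct (Req_dec a 0) as [->|Ha0].
  - rewrite rpow_0_l, (Rpower_pred b r Hb).
    assert (0 < Rpower b (r - 1) * b) by (apply Rmult_lt_0_compat; [apply exp_pos | exact Hb]).
    nra.
  - rewrite rpow_pos_eq by lra. destruct (Rtotal_order a b) as [Hab|[<-|Hab]]; [|lra|].
    + destruct (MVT_cor2 _ _ a b Hab (fun c Hc => Hderiv c ltac:(lra))) as [c [Hc Hmvt]].
      assert (Rpower c (r - 1) <= Rpower b (r - 1)) by (apply Rle_Rpower_l; lra).
      assert (r * Rpower c (r - 1) * (b - a) <= r * Rpower b (r - 1) * (b - a))
        by (apply Rmult_le_compat_r; [|apply Rmult_le_compat_l]; lra).
      lra.
    + destruct (MVT_cor2 _ _ b a Hab (fun c Hc => Hderiv c ltac:(lra))) as [c [Hc Hmvt]].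
      assert (Rpower b (r - 1) <= Rpower c (r - 1)) by (apply Rle_Rpower_l; lra).
      assert (r * Rpower b (r - 1) * (a - b) <= r * Rpower c (r - 1) * (a - b))
        by (apply Rmult_le_compat_r; [|apply Rmult_le_compat_l]; lra).
      lra.
Qed.

Lemma rpow_pair_ge_tangent r a a' b b0 : 1 <= r -> 0 <= a -> 0 <= a' -> 0 < b <= b0 ->
  a + a' <= 2 * b \/ b = b0 ->
  r * Rpower b0 (r - 1) * (a + a' - 2 * b) <= rpow a r + rpow a' r - 2 * rpow b r.
Proof.
  intros Hr Ha Ha' Hb Hcase.
  pose proof (rpow_ge_tangent a b r Ha (proj1 Hb) Hr).
  pose proof (rpow_ge_tangent a' b r Ha' (proj1 Hb) Hr).
  rewrite (rpow_pos_eq b) by lra.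
  assert (r * Rpower b0 (r - 1) * (a + a' - 2 * b) <= r * Rpower b (r - 1) * (a + a' - 2 * b)).
  { destruct Hcase as [Hle|<-]; [|lra].
    assert (Rpower b (r - 1) <= Rpower b0 (r - 1)) by (apply Rle_Rpower_l; lra).
    assert (0 <= r * ((Rpower b0 (r - 1) - Rpower b (r - 1)) * (2 * b - (a + a'))))
      by (apply Rmult_le_pos; [|apply Rmult_le_pos]; lra).
    nra. }
  lra.
Qed.

Lemma ex_series_rpow r (a : nat -> R) : 1 <= r -> (forall n, 0 <= a n <= 1) ->
  ex_series a -> ex_series (fun n => rpow (a n) r).
Proof.
  intros Hr Ha. apply ex_series_dominated. intros n.
  split; [apply rpow_nonneg | apply rpow_le_self; auto].
Qed.

Lemma Series_rpow_majorization r (a a' b : nat -> R) :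
  1 <= r -> (forall n, 0 <= a n <= 1) -> (forall n, 0 <= a' n <= 1) ->
  (forall n, 0 < b n <= b O) -> b O <= 1 ->
  (forall n, (1 <= n)%nat -> a n + a' n <= 2 * b n) ->
  ex_series a -> ex_series a' -> ex_series b ->
  Series a + Series a' = 2 * Series b ->
  2 * Series (fun n => rpow (b n) r)
    <= Series (fun n => rpow (a n) r) + Series (fun n => rpow (a' n) r).
Proof.
  intros Hr Ha Ha' Hb Hb1 Hpair HEa HEa' HEb Hsum.
  assert (Hb01 : forall n, 0 <= b n <= 1) by (intros n; specialize (Hb n); lra).
  assert (Hpow := fun c => ex_series_rpow r c Hr).
  set (c0 := r * Rpower (b O) (r - 1)).
  assert (Hle : Series (fun n => c0 * (a n + a' n - 2 * b n))
    <= Series (fun n => rpow (a n) r + rpow (a' n) r - 2 * rpow (b n) r)).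
  { apply Series_le_ex; auto using ex_series_scal_R, ex_series_plus_R, ex_series_minus_R.
    intros n. apply rpow_pair_ge_tangent; auto; try apply Ha; try apply Ha'.
    destruct n as [|n]; [now right | left; apply Hpair; lia]. }
  rewrite Series_scal_l, !Series_minus, !Series_plus, !Series_scal_l, Hsum in Hle;
    auto using ex_series_scal_R, ex_series_plus_R.
  lra.
Qed.

Lemma term_eq_rpow r t : term r t = rpow (sinc_sq t) r.
Proof.
  unfold term, sinc_sq. set (s := sinc (PI * t)).
  destruct (Req_dec s 0) as [Hs|Hs]; [rewrite Hs, Rabs_R0, Rmult_0_r, !rpow_0_l; reflexivity|].
  assert (Habs : 0 < Rabs s) by now apply Rabs_pos_lt.
  rewrite !rpow_pos_eq by (try apply Rabs_pos_lt; nra).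
  replace (2 * r) with (INR 2 * r) by (simpl; ring).
  rewrite <- Rpower_mult, (Rpower_pow 2 _ Habs). f_equal.
  rewrite pow2_abs. ring.
Qed.

Lemma sinc_sum_eq r x : sinc_sum r x =
  Series (fun n => rpow (sinc_sq (x + INR n)) r)
  + Series (fun n => rpow (sinc_sq (x - INR (S n))) r).
Proof. unfold sinc_sum. f_equal; apply Series_ext; intros n; apply term_eq_rpow. Qed.

Theorem proposition2 (r : R) (hr : 1 <= r) :
  forall x : R, 0 <= x <= 1 -> sinc_sum r (1 / 2) <= sinc_sum r x.
Proof.
  intros x Hx.
  assert (Hx2 : Rabs x <= 2) by (apply Rabs_le_between; lra).
  assert (Hh2 : Rabs (1/2) <= 2) by (apply Rabs_le_between; lra).
  assert (Hunit : forall t, 0 <= sinc_sq t <= 1)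
    by (split; [apply sinc_sq_nonneg | apply sinc_sq_le_1]).
  pose proof (sinc_sq_sum_eq_1 x Hx) as Hsum_x.
  pose proof (sinc_sq_sum_eq_1 (1/2) ltac:(lra)) as Hsum_half.
  unfold sinc_sq_sum in Hsum_x, Hsum_half.
  rewrite (Series_ext _ _ sinc_sq_half_minus_INR) in Hsum_half.
  pose proof (Series_rpow_majorization r (fun n => sinc_sq (x + INR n))
    (fun n => sinc_sq (x - INR (S n))) (fun n => sinc_sq (1/2 + INR n)) hr
    (fun n => Hunit _) (fun n => Hunit _) sinc_sq_half_plus_INR_bounds (sinc_sq_le_1 _)
    (fun n => sinc_sq_pair_le x n Hx)
    (ex_series_sinc_sq_plus x Hx2) (ex_series_sinc_sq_minus x Hx2)
    (ex_series_sinc_sq_plus _ Hh2) ltac:(lra)) as Hmaj.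
  rewrite !sinc_sum_eq, (Series_ext (fun n => rpow (sinc_sq (1 / 2 - INR (S n))) r)
    (fun n => rpow (sinc_sq (1/2 + INR n)) r)) by (intros n; now rewrite sinc_sq_half_minus_INR).
  lra.
Qed.
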